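(* Let $\mathcal{A}=(Q,\delta,I,F)$ be a complete Büchi automaton and let $p,q,r\in Q$ and $a\in\Sigma$ be such that $q\in\delta(r,a)$ and $p\preceq_{\mathit{de}}q$. Let $\mathcal{A}'=(Q,\delta',I,F)$ where $\delta'=\delta\cup\{r\xrightarrow{a}p\}$ (i.e. $\delta'(r,a)=\delta(r,a)\cup\{p\}$ and $\delta'$ agrees with $\delta$ elsewhere). Then $\mathcal{L}(\mathcal{A})=\mathcal{L}(\mathcal{A}')$.
   Context: A Büchi automaton is $\mathcal{A}=(Q,\delta,I,F)$ over a finite alphabet $\Sigma$ with $\delta:Q\times\Sigma\to2^Q$, complete if $\delta(q,a)\ne\emptyset$ always. A run from $q$ on $\alpha=\alpha_0\alpha_1\cdots$ is $\rho$ with $\rho_0=q$, $\rho_{i+1}\in\delta(\rho_i,\alpha_i)$; accepting if some state of $F$ occurs infinitely often; $\mathcal{L}(\mathcal{A})$ is the set of words with an accepting run from an initial state. Delayed simulation: in the game from $(p_0,r_0)$, in round $i$ Spoiler picks $p_i\xrightarrow{\alpha_i}p_{i+1}$ and Duplicator answers $r_i\xrightarrow{\alpha_i}r_{i+1}$; a Duplicator strategy is a map $\sigma$ with $\sigma(r,p\xrightarrow{a}p')\in\delta(r,a)$ (no lookahead). Duplicator wins if for all $i$, $p_i\in F$ implies $r_k\in F$ for some $k\ge i$. $p\preceq_{\mathit{de}}r$ (the delayed simulation on $\mathcal{A}$) iff Duplicator has a winning strategy in $\mathcal{A}$ from $(p,r)$. *)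

From mathcomp Require Import all_boot.
Set Implicit Arguments. Unset Strict Implicit. Unset Printing Implicit Defensive.

Record buchi (Q S : finType) := Buchi {
  delta : Q -> S -> {set Q};
  init  : {set Q};
  fin   : {set Q}
}.

Section Buchi.
Variables (Q S : finType).
Implicit Types (A : buchi Q S) (w : nat -> S) (rho : nat -> Q).

Definition complete A : Prop := forall q a, delta A q a != set0.

Definition run A q w rho : Prop :=
  rho 0 = q /\ forall i, rho i.+1 \in delta A (rho i) (w i).

Definition accepting A rho : Prop :=
  forall n, exists m, n <= m /\ rho m \in fin A.

Definition lang A (w : nat -> S) : Prop :=
  exists q rho, q \in init A /\ run A q w rho /\ accepting A rho.

(* Duplicator strategy sigma(r, p -a-> p') : it must answer with an
   a-successor of r (for every legal Spoiler transition). *)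
Definition dup_strategy A (sigma : Q -> Q -> S -> Q -> Q) : Prop :=
  forall r p a p', p' \in delta A p a -> sigma r p a p' \in delta A r a.

(* Duplicator's states r_i when playing sigma from r0 against Spoiler's
   sequence of transitions p_i -(w i)-> p_{i+1}. *)
Fixpoint dup_play (sigma : Q -> Q -> S -> Q -> Q) (r0 : Q) (p : nat -> Q)
  w (i : nat) : Q :=
  match i with
  | 0 => r0
  | i'.+1 => sigma (dup_play sigma r0 p w i') (p i') (w i') (p i'.+1)
  end.

Definition delayed_sim A (p r : Q) : Prop :=
  exists sigma, dup_strategy A sigma /\
    forall w (ps : nat -> Q), run A p w ps ->
      forall i, ps i \in fin A ->
        exists k, i <= k /\ dup_play sigma r ps w k \in fin A.

Definition add_trans A (r : Q) (a : S) (p : Q) : buchi Q S :=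
  Buchi (fun s b => if (s == r) && (b == a) then p |: delta A s b
                    else delta A s b)
        (init A) (fin A).
End Buchi.

From mathcomp Require Import all_boot zify.

Set Implicit Arguments. Unset Strict Implicit. Unset Printing Implicit Defensive.

(* Every run of A is a run of A', so L(A) is included in L(A').  Conversely,
   an accepting run rho of A' is turned into a run of A by a stack of layers.
   The top layer follows rho.  Whenever rho takes the new transition r -a-> p,
   the current top layer takes r -a-> q instead and a new top layer is pushed
   at p; every other layer follows the layer above it through Duplicator's
   strategy, started from q when that layer above was pushed.  Hence every
   layer is a run of A, in particular the bottom one.  Each visit of rho to F
   is a visit of the top layer; the delayed winning condition moves a visit of
   layer k+1 to a later visit of layer k, so after finitely many layers it
   reaches the bottom layer, which is therefore accepting. *)

Lemma downward_ind (P : nat -> Prop) n :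
  P n -> (forall k, k < n -> P k.+1 -> P k) -> forall k, k <= n -> P k.
Proof.
move=> Pn IH k /subKn <-; elim: (n - k) (leq_subr k n) => [|d IHd] le_d_n.
  by rewrite subn0.
by apply: IH; [lia | rewrite subnSK //; apply: IHd; apply: ltnW].
Qed.

Section AddTransition.
Variables (Q S : finType) (A : buchi Q S) (r : Q) (a : S) (p : Q).

Lemma delta_sub_add_trans s b : delta A s b \subset delta (add_trans A r a p) s b.
Proof. by rewrite /add_trans /=; case: ifP => _; rewrite ?subsetUr. Qed.

Lemma add_trans_new s b s' :
  s' \in delta (add_trans A r a p) s b -> s' \notin delta A s b ->
  [/\ s = r, b = a & s' = p].
Proof.
rewrite /add_trans /=; case: ifP => [/andP[/eqP-> /eqP->] | _]; last by move->.
by rewrite in_setU1 => /orP[/eqP-> | ->].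
Qed.

Lemma run_add_trans q0 w rho : run A q0 w rho -> run (add_trans A r a p) q0 w rho.
Proof.
move=> [rho0 rho_step]; split=> // i.
exact: subsetP (delta_sub_add_trans _ _) _ (rho_step i).
Qed.

Lemma lang_add_trans w : lang A w -> lang (add_trans A r a p) w.
Proof. by move=> [q0 [rho [q0I [/run_add_trans rho_run acc]]]]; exists q0, rho. Qed.

End AddTransition.

Section Layers.
Variables (Q S : finType) (A : buchi Q S) (r q p : Q) (a : S).
Variable sigma : Q -> Q -> S -> Q -> Q.
Variables (w : nat -> S) (rho : nat -> Q).

Definition new_step t : bool := rho t.+1 \notin delta A (rho t) (w t).

Fixpoint top_layer t : nat :=
  if t is t'.+1 then top_layer t' + new_step t' else 0.

(* [next_layer cur t n k] is layer [k] at time [t.+1] given the layers [cur]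
   at time [t]; the fuel [n = top_layer t.+1 - k] is the distance to the top,
   as each layer depends on the new state of the layer above it. *)
Fixpoint next_layer (cur : nat -> Q) t n k : Q :=
  if n is n'.+1 then
    if new_step t && (k.+1 == top_layer t.+1) then q
    else sigma (cur k) (cur k.+1) (w t) (next_layer cur t n' k.+1)
  else rho t.+1.

Fixpoint layer t : nat -> Q :=
  if t is t'.+1 then fun k => next_layer (layer t') t' (top_layer t - k) k
  else fun=> rho 0.

Lemma top_layerS t : top_layer t.+1 = top_layer t + new_step t.
Proof. by []. Qed.

Lemma top_layer_mono : {homo top_layer : m n / m <= n}.
Proof. by apply: homo_leq => [//|n m k|t]; [apply: leq_trans | apply: leq_addr]. Qed.

Lemma layer_top t k : top_layer t <= k -> layer t k = rho t.
Proof.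
by case: t => [//|t] le_top_k; rewrite /= (_ : top_layer t.+1 - k = 0) //; lia.
Qed.

Lemma layer_new t : new_step t -> layer t.+1 (top_layer t) = q.
Proof.
by move=> new_t /=; rewrite new_t addn1 subSnn /= new_t addn1 eqxx.
Qed.

Lemma layer_follow t k : k < top_layer t ->
  layer t.+1 k = sigma (layer t k) (layer t k.+1) (w t) (layer t.+1 k.+1).
Proof.
move=> lt_k_top /=.
rewrite (_ : _ - k = (top_layer t + new_step t - k.+1).+1) /=; last lia.
case: (new_step t) => //=.
by rewrite addn1 eqSS ltn_eqF.
Qed.

Hypothesis sigma_strat : dup_strategy A sigma.
Hypothesis qra : q \in delta A r a.
Variable q0 : Q.
Hypothesis rho_run : run (add_trans A r a p) q0 w rho.

Lemma new_step_added t : new_step t -> [/\ rho t = r, w t = a & rho t.+1 = p].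
Proof. exact: add_trans_new (proj2 rho_run t). Qed.

Lemma layer_step t k : k <= top_layer t -> layer t.+1 k \in delta A (layer t k) (w t).
Proof.
move: k; apply: downward_ind.
  rewrite [layer t _]layer_top //; case new_t: (new_step t).
    by rewrite layer_new //; case: (new_step_added new_t) => -> -> _.
  by rewrite layer_top ?top_layerS ?new_t ?addn0 //; apply/negbFE.
by move=> k lt_k_top step_above; rewrite layer_follow //; apply: sigma_strat.
Qed.

Lemma run_bottom_layer : run A q0 w (layer^~ 0).
Proof. by split=> [|t]; [apply: (proj1 rho_run) | apply: layer_step]. Qed.

Hypothesis sigma_wins : forall w (ps : nat -> Q), run A p w ps ->
  forall i, ps i \in fin A -> exists k, i <= k /\ dup_play sigma q ps w k \in fin A.

Section NewLayer.
Variable t0 : nat.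
Hypothesis new_t0 : new_step t0.

Let k0 := top_layer t0.
Let ws n := w (t0.+1 + n).
Let pushed n := layer (t0.+1 + n) k0.+1.

Lemma top_layer_after n : k0 < top_layer (t0.+1 + n).
Proof.
apply: leq_trans (top_layer_mono (leq_addr n _)).
by rewrite top_layerS new_t0 addn1.
Qed.

Lemma run_pushed_layer : run A p ws pushed.
Proof.
split=> [|n]; last by rewrite /pushed addnS; apply: layer_step; apply: top_layer_after.
rewrite /pushed addn0 layer_top; first by case: (new_step_added new_t0).
by rewrite top_layerS new_t0 addn1.
Qed.

Lemma dup_play_pushed_layer n : dup_play sigma q pushed ws n = layer (t0.+1 + n) k0.
Proof.
elim: n => [|n IH]; first by rewrite addn0 layer_new.
by rewrite [LHS]/= IH /pushed addnS [RHS]layer_follow ?top_layer_after.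
Qed.

Lemma fin_layer_below t : t0 < t -> layer t k0.+1 \in fin A ->
  exists2 t', t <= t' & layer t' k0 \in fin A.
Proof.
move=> lt_t0_t fin_t.
have [|k [le_k fin_k]] := sigma_wins run_pushed_layer (i := t - t0.+1).
  by rewrite /pushed subnKC.
by exists (t0.+1 + k); [lia | rewrite -dup_play_pushed_layer].
Qed.

End NewLayer.

Lemma new_step_at_layer k t : k < top_layer t ->
  exists t0, [/\ t0 < t, new_step t0 & top_layer t0 = k].
Proof.
elim: t => [//|t IH]; rewrite top_layerS.
case: (ltnP k (top_layer t)) => [/IH[t0 [lt_t0 new_t0 top_t0]] _ | le_top_k].
  by exists t0; split=> //; apply: ltnW.
case new_t: (new_step t) => lt_k_top; last lia.
by exists t; split=> //; lia.
Qed.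

Lemma fin_bottom_layer k t : k <= top_layer t -> layer t k \in fin A ->
  exists2 t', t <= t' & layer t' 0 \in fin A.
Proof.
elim: k t => [|k IH] t le_k_top fin_k; first by exists t.
have [t0 [lt_t0_t new_t0 top_t0]] := new_step_at_layer le_k_top.
rewrite -top_t0 in fin_k.
have [t1 le_t_t1] := fin_layer_below new_t0 lt_t0_t fin_k.
rewrite top_t0 => /IH[| t2 le_t1_t2 fin_t2].
  by have := top_layer_mono le_t_t1; lia.
by exists t2; first exact: leq_trans le_t1_t2.
Qed.

Lemma accepting_bottom_layer :
  accepting (add_trans A r a p) rho -> accepting A (layer^~ 0).
Proof.
move=> acc n; have [m [le_n_m fin_m]] := acc n.
rewrite -(layer_top (leqnn (top_layer m))) in fin_m.
have [t le_m_t fin_t] := fin_bottom_layer (leqnn _) fin_m.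
by exists t; split; first exact: leq_trans le_m_t.
Qed.

End Layers.

Lemma lang_add_trans_sim (Q S : finType) (A : buchi Q S) (p q r : Q) (a : S) w :
  q \in delta A r a -> delayed_sim A p q ->
  lang (add_trans A r a p) w -> lang A w.
Proof.
move=> qra [sigma [sigma_strat sigma_wins]] [q0 [rho [q0I [rho_run acc]]]].
exists q0, (layer A q sigma w rho ^~ 0); split=> //; split.
  exact: (run_bottom_layer sigma_strat qra rho_run).
exact: (accepting_bottom_layer sigma_strat qra rho_run sigma_wins acc).
Qed.

Theorem lemma11 (Q S : finType) (A : buchi Q S) (p q r : Q) (a : S) :
  complete A ->
  q \in delta A r a ->
  delayed_sim A p q ->
  forall w : nat -> S, lang A w <-> lang (add_trans A r a p) w.
Proof.
move=> _ qra simpq w; split; first exact: lang_add_trans.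
exact: (lang_add_trans_sim qra simpq).
Qed.
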